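(* Let $g$ be any change of section. Then: (1) for all $\theta\in\mathbb{R}^d$, the matrices $\widehat\mu(\theta)$ and ${}^g\widehat\mu(\theta)$ have the same eigenvalues; in particular ${}^gk(\theta)=k(\theta)$ wherever $k$ is defined; (2) ${}^g\widehat\mu(0)=\widehat\mu(0)$, i.e. the Markovian part of the $g$-changed process has the same transition matrix as the original one; in particular ${}^g\pi=\pi$; (3) ${}^gm=m$; (4) there is no affine hyperplane $H$ of $\mathbb{R}^d$ such that $\operatorname{supp}({}^g\mu)\subset H$, where $\operatorname{supp}({}^g\mu)=\bigcup_{i,j}\operatorname{supp}({}^g\mu_{i,j})$.
   Context: Fix integers $d,p\ge 1$. Let $(Z_n)=(A_n,M_n)$ be a Markov-additive process on $\mathbb{Z}^d\times\{1,\dots,p\}$ (a Markov chain with $\mathbb{P}_{(x,i)}((A_1,M_1)=(x',i'))=\mathbb{P}_{(0,i)}((A_1,M_1)=(x'-x,i'))$), with jump matrix of sub-probability measures $\mu_{i,j}(x)=\mathbb{P}_{(0,i)}((A_1,M_1)=(x,j))$, assumed irreducible, aperiodic (for every state $(x,i)$, $\gcd\{n\ge1:\mathbb{P}_{(x,i)}(Z_n=(x,i))>0\}=1$), and with finite exponential moments ($\sum_x e^{\alpha\|x\|}\mu_{i,j}(x)<\infty$ for all $\alpha>0$). Fourier transform: $\widehat\mu(\theta)_{i,j}=\sum_x e^{\mathbf{i}x\cdot\theta}\mu_{i,j}(x)$; $\widehat\mu(0)$ is the transition matrix of $(M_n)$, with unique stationary distribution $\pi$. Local drifts $m_{i,j}=\sum_x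 x\mu_{i,j}(x)$, global drift $m=\sum_{i,j}\pi_im_{i,j}$. Near $\theta=0$, $k(\theta)$ denotes the unique eigenvalue of maximal modulus of $\widehat\mu(\theta)$ (it is simple). A change of section is a real $p\times d$ matrix $g$ with rows $g_1,\dots,g_p$; the $g$-changed process is the Markov-additive process (with additive part in a countable subset of $\mathbb{R}^d$) with jump measures ${}^g\mu_{i,j}(x)=\mu_{i,j}(x+g_j-g_i)$, $x\in\mathbb{R}^d$. All quantities of the $g$-changed process are defined in the same way and denoted with a left superscript $g$: ${}^g\widehat\mu(\theta)_{i,j}=\sum_{x\in\mathbb{R}^d}e^{\mathbf{i}x\cdot\theta}\,{}^g\mu_{i,j}(x)$, ${}^g\pi$ the stationary distribution of the matrix ${}^g\widehat\mu(0)$, ${}^gm_{i,j}=\sum_x x\,{}^g\mu_{i,j}(x)$, ${}^gm=\sum_{i,j}{}^g\pi_i\,{}^gm_{i,j}$, ${}^gk$ the leading eigenvalue of ${}^g\widehat\mu$. *)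

From HB Require Import structures.
From mathcomp Require Import all_boot all_order all_algebra.
From mathcomp Require Import all_classical all_reals all_analysis.
From mathcomp Require Import complex.

Set Implicit Arguments.
Unset Strict Implicit.
Unset Printing Implicit Defensive.

Import Order.TTheory GRing.Theory Num.Theory.
Import numFieldNormedType.Exports.
Local Open Scope ring_scope.

Section MAP.
Variable R : realType.
Variables d p : nat.

(* jump "measures": mu i j x = P_(0,i)((A_1,M_1) = (x,j)), x ranging over R^d
   (for the original process the support is in Z^d, assumed separately). *)
Definition jumps := 'I_p -> 'I_p -> 'rV[R]_d -> R.

Definition dotv (x y : 'rV[R]_d) : R := \sum_(k < d) x 0 k * y 0 k.

Definition intv (x : 'rV[R]_d) : Prop := forall k, x 0 k \is a Num.int.

(* Sum of a real family over an arbitrary index type (meaningful for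
   absolutely summable families): positive part minus negative part,
   each summed with MathComp-Analysis's esum. *)
Definition rsum (T : choiceType) (f : T -> R) : R :=
  (fine (\esum_(x in [set: T]) (Num.max (f x) 0)%:E)
   - fine (\esum_(x in [set: T]) (Num.max (- f x) 0)%:E))%R.

Definition change_section (g : 'M[R]_(p, d)) (mu : jumps) : jumps :=
  fun i j x => mu i j (x + row j g - row i g).

Definition fourier (mu : jumps) (theta : 'rV[R]_d) : 'M[complex R]_p :=
  \matrix_(i, j)
    Complex (rsum (fun x => cos (dotv x theta) * mu i j x))
            (rsum (fun x => sin (dotv x theta) * mu i j x)).

(* transition matrix of the Markovian part (M_n): hat mu(0), as a real matrix *)
Definition trans (mu : jumps) : 'M[R]_p := \matrix_(i, j) rsum (mu i j).

Definition stationary (P : 'M[R]_p) (pi : 'rV[R]_p) : Prop :=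
  (forall i, 0 <= pi 0 i) /\ \sum_i pi 0 i = 1 /\ pi *m P = pi.

Definition local_drift (mu : jumps) (i j : 'I_p) : 'rV[R]_d :=
  \row_k rsum (fun x : 'rV[R]_d => x 0 k * mu i j x).

Definition global_drift (mu : jumps) (pi : 'rV[R]_p) : 'rV[R]_d :=
  \sum_i \sum_j pi 0 i *: local_drift mu i j.

(* one-step and n-step accessibility for the Markov-additive chain on
   R^d x {1..p}: P_{(x,i)}(Z_1 = (y,j)) = mu_{i,j}(y - x). *)
Definition step (mu : jumps) (s t : 'rV[R]_d * 'I_p) : Prop :=
  0 < mu s.2 t.2 (t.1 - s.1).

Fixpoint reach (mu : jumps) (n : nat) (s t : 'rV[R]_d * 'I_p) : Prop :=
  match n with
  | O => s = t
  | S n => exists u, reach mu n s u /\ step mu u t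
  end.

Definition irreducible_MAP (mu : jumps) : Prop :=
  forall (x y : 'rV[R]_d) (i j : 'I_p), intv x -> intv y ->
    exists n, reach mu n (x, i) (y, j).

(* aperiodicity: for each state (x,i) of Z^d x {1..p}, the gcd of
   {n >= 1 : P_{(x,i)}(Z_n = (x,i)) > 0} is 1, i.e. no k > 1 divides all
   these return times *)
Definition aperiodic_MAP (mu : jumps) : Prop :=
  forall (x : 'rV[R]_d) (i : 'I_p), intv x ->
    forall k : nat, (1 < k)%N ->
      exists n : nat, [/\ (0 < n)%N, reach mu n (x, i) (x, i) & ~~ (k %| n)%N].

Definition exp_moments (mu : jumps) : Prop :=
  forall (i j : 'I_p) (alpha : R), 0 < alpha ->
    (\esum_(x in [set: 'rV[R]_d]) (expR (alpha * `|x|) * mu i j x)%:E < +oo)%E.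

(* lambda is the unique eigenvalue of maximal modulus of A
   (this is how k(theta) is defined, where it is defined) *)
Definition leading_eigenvalue (A : 'M[complex R]_p) (lambda : complex R) : Prop :=
  eigenvalue A lambda /\
  (forall nu, eigenvalue A nu -> nu != lambda -> `|nu| < `|lambda|).

Definition supp_in_affine_hyperplane (mu : jumps) : Prop :=
  exists (a : 'rV[R]_d) (c : R), a != 0 /\
    forall i j x, mu i j x != 0 -> dotv a x = c.

End MAP.

(* Changing the section translates each jump x of mu_{i,j} by the constant
   g_i - g_j.  Translations are bijections of R^d, so the masses of the jump
   measures, hence the Markovian part and its stationary law, are unchanged,
   while the Fourier transform is conjugated by D(theta) = diag(e^{i g_i.theta}),
   which keeps its spectrum.  The local drifts move by -P_{i,j} (g_j - g_i), and
   these corrections average to zero under the stationary law pi, which is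
   unique by irreducibility.  Finally, if the support of ^g mu lay in the
   hyperplane {a.x = c}, every path of length n of the chain from (x, i) to
   (y, j) would satisfy a.(y - x) = n c + a.g_j - a.g_i; a return loop of
   positive length (aperiodicity) forces c = 0, and then paths from (0, i) to
   (e_k, i) (irreducibility) force a = 0. *)

From HB Require Import structures.
From mathcomp Require Import all_boot all_order all_algebra.
From mathcomp Require Import all_classical all_reals all_analysis.
From mathcomp Require Import complex.
From mathcomp Require Import lra ring.
Import Order.TTheory GRing.Theory Num.Theory.
Import numFieldNormedType.Exports.
Local Open Scope ring_scope.
Set Implicit Arguments.
Unset Strict Implicit.
Unset Printing Implicit Defensive.

Section RealSum.
Variables (R : realType) (T : choiceType).
Implicit Types (f h : T -> R) (c : R).

Definition abs_summable f := summable [set: T] (EFin \o f).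

Lemma ge0_esumZl (S : set T) (r : R) (a : T -> \bar R) :
  0 <= r -> (forall x, (0 <= a x)%E) ->
  (\esum_(x in S) (r%:E * a x) = r%:E * \esum_(x in S) a x)%E.
Proof.
move=> r0 a0; rewrite /esum -ereal_supZl//; last first.
  by apply/set0P; exists 0%E, set0; [exact: fsets_set0 | rewrite fsbig_set0].
rewrite image_comp; congr ereal_sup; apply: eq_imagel => A _ /=.
by rewrite ge0_mule_fsumr.
Qed.

Lemma abs_summable_le f h :
  (forall x, `|f x| <= `|h x|) -> abs_summable h -> abs_summable f.
Proof. by move=> fh; apply: le_lt_trans; apply: le_esum => x _; rewrite lee_fin.
Qed.

Lemma ge0_rsumE f : (forall x, 0 <= f x) -> rsum f = fine (\esum_(x in [set: T]) (f x)%:E).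
Proof.
move=> f0; rewrite /rsum [X in _ - fine X]esum1 ?subr0 => [|x _].
  by congr (fine _); apply: eq_esum => x _; rewrite (max_l (f0 x)).
by rewrite (max_r _) // oppr_le0.
Qed.

Lemma rsum_ge0 f : (forall x, 0 <= f x) -> 0 <= rsum f.
Proof.
by move=> f0; rewrite ge0_rsumE // fine_ge0 // esum_ge0 // => x _; rewrite lee_fin.
Qed.

Let ge0_esum_fin_num f : (forall x, 0 <= f x) -> abs_summable f ->
  (\esum_(x in [set: T]) (f x)%:E)%E \is a fin_num.
Proof.
move=> f0 sf; rewrite ge0_fin_numE; last by apply: esum_ge0 => x _; rewrite lee_fin.
by apply: le_lt_trans sf; apply: le_esum => x _; rewrite lee_fin ler_norm.
Qed.

Lemma rsum_gt0 f x : (forall x, 0 <= f x) -> abs_summable f -> 0 < f x -> 0 < rsum f.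
Proof.
move=> f0 sf fx; rewrite ge0_rsumE //; apply: lt_le_trans fx _.
rewrite -lee_fin fineK ?ge0_esum_fin_num //; apply: esum_ge; exists [set x]%classic.
  by split; [exact: finite_set1 | ].
by rewrite fsbig_set1.
Qed.

Lemma abs_summableZ c f : abs_summable f -> abs_summable (fun x => c * f x).
Proof.
rewrite /abs_summable /summable /= => sf.
under eq_esum do rewrite normrM EFinM.
by rewrite ge0_esumZl // lte_mul_pinfty.
Qed.

Lemma abs_summableD f h :
  abs_summable f -> abs_summable h -> abs_summable (fun x => f x + h x).
Proof. exact: summableD. Qed.

Lemma rsumD_ge0 f h : (forall x, 0 <= f x) -> (forall x, 0 <= h x) ->
  abs_summable f -> abs_summable h -> rsum (fun x => f x + h x) = rsum f + rsum h.
Proof.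
move=> f0 h0 sf sh; rewrite !ge0_rsumE // => [|x]; last exact: addr_ge0.
under eq_esum do rewrite EFinD.
by rewrite esumD ?fineD ?ge0_esum_fin_num // => x _; rewrite lee_fin.
Qed.

Lemma rsumB_ge0 f h : (forall x, 0 <= f x) -> (forall x, 0 <= h x) ->
  abs_summable f -> abs_summable h -> rsum (fun x => f x - h x) = rsum f - rsum h.
Proof.
move=> f0 h0 sf sh; rewrite (ge0_rsumE f0) (ge0_rsumE h0) -fineB ?ge0_esum_fin_num //.
rewrite -esumB // => [|x _|x _]; try by rewrite lee_fin.
set fBh := fun x => f x - h x.
have -> : funepos (fun x => ((f x)%:E - (h x)%:E)%E) = EFin \o fBh^\+.
  by apply/funext => x; rewrite funeposE -EFin_max.
have -> : funeneg (fun x => ((f x)%:E - (h x)%:E)%E) = EFin \o fBh^\-.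
  by apply/funext => x; rewrite funenegE -EFin_max.
rewrite fineB ?ge0_esum_fin_num ?funrpos_ge0 ?funrneg_ge0 //.
- apply: abs_summable_le sf => x; rewrite !ger0_norm ?funrpos_ge0 //.
  by rewrite ge_max f0 lerBlDr lerDl h0.
- apply: abs_summable_le sh => x; rewrite !ger0_norm ?funrneg_ge0 //.
  by rewrite ge_max h0 opprB lerBlDr lerDl f0.
Qed.

Lemma abs_summable_funrpos f : abs_summable f -> abs_summable f^\+.
Proof.
apply: abs_summable_le => x; rewrite ger0_norm ?funrpos_ge0 //.
by rewrite /funrpos ge_max ler_norm normr_ge0.
Qed.

Lemma abs_summable_funrneg f : abs_summable f -> abs_summable f^\-.
Proof.
apply: abs_summable_le => x; rewrite ger0_norm ?funrneg_ge0 //.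
by rewrite /funrneg ge_max normr_ge0 -normrN ler_norm.
Qed.

Lemma rsum_funrposBneg f : rsum f = rsum f^\+ - rsum f^\-.
Proof. by rewrite (ge0_rsumE (funrpos_ge0 f)) (ge0_rsumE (funrneg_ge0 f)). Qed.

Let funrposBnegE f x : f^\+ x - f^\- x = f x.
Proof. by have /(congr1 (@^~ x)) := funrposBneg f. Qed.

Lemma rsumN f : rsum (fun x => - f x) = - rsum f.
Proof. by rewrite /rsum; under [X in _ - fine X]eq_esum do rewrite opprK; rewrite opprB. Qed.

Lemma rsumD f h : abs_summable f -> abs_summable h ->
  rsum (fun x => f x + h x) = rsum f + rsum h.
Proof.
move=> sf sh.
have -> : (fun x => f x + h x) = (fun x => (f^\+ x + h^\+ x) - (f^\- x + h^\- x)).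
  by apply/funext => x; rewrite opprD addrACA !funrposBnegE.
have [fp fn] := (funrpos_ge0 f, funrneg_ge0 f).
have [hp hn] := (funrpos_ge0 h, funrneg_ge0 h).
have [sfp sfn] := (abs_summable_funrpos sf, abs_summable_funrneg sf).
have [shp shn] := (abs_summable_funrpos sh, abs_summable_funrneg sh).
rewrite rsumB_ge0 ?rsumD_ge0 ?abs_summableD // => [|x|x]; try exact: addr_ge0.
by rewrite (rsum_funrposBneg f) (rsum_funrposBneg h); ring.
Qed.

Let ge0_rsumZ c f : 0 <= c -> (forall x, 0 <= f x) -> abs_summable f ->
  rsum (fun x => c * f x) = c * rsum f.
Proof.
move=> c0 f0 sf; rewrite !ge0_rsumE // => [|x]; last exact: mulr_ge0.
under eq_esum do rewrite EFinM.
by rewrite ge0_esumZl ?fineM ?ge0_esum_fin_num // => x; rewrite lee_fin.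
Qed.

Lemma rsumZ c f : abs_summable f -> rsum (fun x => c * f x) = c * rsum f.
Proof.
move=> sf; wlog c0 : c / 0 <= c => [hwlog|].
  have [|/ltW c0] := leP 0 c; first exact: hwlog.
  have -> : (fun x => c * f x) = (fun x => - (- c * f x)).
    by apply/funext => x; rewrite mulNr opprK.
  by rewrite rsumN hwlog ?oppr_ge0 // mulNr opprK.
rewrite rsum_funrposBneg ge0_funrposM // ge0_funrnegM //.
rewrite !ge0_rsumZ ?funrpos_ge0 ?funrneg_ge0 ?abs_summable_funrneg ?abs_summable_funrpos //.
by rewrite -mulrBr -rsum_funrposBneg.
Qed.

Lemma reindex_rsum (e : T -> T) f : bijective e -> rsum (f \o e) = rsum f.
Proof.
rewrite -setTT_bijective => be.
by rewrite /rsum; congr (fine _ - fine _); rewrite [RHS](reindex_esum _ _ _ _ be).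
Qed.
End RealSum.

Lemma eigenvalue_conj (F : fieldType) n (A D D' : 'M[F]_n) :
  D' *m D = 1%:M -> D *m D' = 1%:M -> eigenvalue (D *m A *m D') = eigenvalue A.
Proof.
have conj_sub (B E E' : 'M[F]_n) l : E' *m E = 1%:M -> E *m E' = 1%:M ->
    eigenvalue (E *m B *m E') l -> eigenvalue B l.
  move=> EE' E'E /eigenvalueP [v vB v_neq0]; apply/eigenvalueP; exists (v *m E).
    by rewrite scalemxAl -vB !mulmxA -(mulmxA _ E' E) EE' mulmx1.
  by apply: contra v_neq0 => /eqP vE0; rewrite -[v]mulmx1 -E'E mulmxA vE0 mul0mx.
move=> D'D DD'; apply/funext => l; apply/idP/idP => [|Al]; first exact: conj_sub D'D DD'.
apply: (conj_sub _ D' D _ DD' D'D).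
by rewrite !mulmxA D'D mul1mx -mulmxA D'D mulmx1.
Qed.

Lemma stationary_increments_eq0 (R : comNzRingType) (V : lmodType R) n
    (P : 'M[R]_n) (pi : 'rV[R]_n) (v : 'I_n -> V) :
  (forall i, \sum_j P i j = 1) -> pi *m P = pi ->
  \sum_i \sum_j (pi 0 i * P i j) *: (v j - v i) = 0.
Proof.
move=> P1 piP; apply/eqP.
under eq_bigr => i _ do rewrite (eq_bigr _ (fun j _ => scalerBr _ _ _)) sumrB.
rewrite sumrB exchange_big /= subr_eq0; apply/eqP.
transitivity (\sum_j pi 0 j *: v j).
  apply: eq_bigr => j _; rewrite -scaler_suml -[in RHS]piP mxE.
  by congr (_ *: _); apply: eq_bigr => i _.
by apply: eq_bigr => i _; rewrite -scaler_suml -mulr_sumr P1 mulr1.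
Qed.

Lemma stationary_unique (R : realType) n (P : 'M[R]_n) : (0 < n)%N ->
  (forall w : 'rV_n, (forall i, 0 <= w 0 i) -> w *m P = w ->
     forall k, w 0 k = 0 -> w = 0) ->
  forall pi pi', stationary P pi -> stationary P pi' -> pi = pi'.
Proof.
move=> n_gt0 fixed_eq0 pi pi' [pi_ge0 [pi1 piP]] [pi'_ge0 [pi'1 pi'P]].
have pi'_gt0 i : 0 < pi' 0 i.
  rewrite lt_def pi'_ge0 andbT; apply/eqP => /(fixed_eq0 _ pi'_ge0 pi'P) pi'0.
  by move/eqP: pi'1; rewrite pi'0 big1 => [|j _]; rewrite ?mxE // eq_sym oner_eq0.
(* pi - t pi', with t the least ratio pi_i / pi'_i, is a nonnegative fixed
   vector vanishing at the minimizing index. *)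
pose ratio i := pi 0 i / pi' 0 i.
have [k _ k_min] := @arg_minP _ _ _ (Ordinal n_gt0) xpredT ratio isT.
pose t := ratio k.
have pi_eq : pi = t *: pi'.
  apply/eqP; rewrite -subr_eq0; apply/eqP; apply: (fixed_eq0 _ _ _ k).
  - by move=> i; rewrite !mxE subr_ge0 -ler_pdivlMr // k_min.
  - by rewrite mulmxBl -scalemxAl piP pi'P.
  - by rewrite !mxE /t /ratio divfK ?subrr // gt_eqF.
have t1 : t = 1.
  by move: pi1; rewrite pi_eq (eq_bigr _ (fun i _ => mxE _ _ _ _)) -mulr_sumr pi'1 mulr1.
by rewrite pi_eq t1 scale1r.
Qed.

Lemma normr_entry_le (R : realType) m n (x : 'M[R]_(m, n)) i j : `|x i j| <= `|x|.
Proof. by rewrite [`|x|]mx_normrE; exact: (le_bigmax _ _ (i, j)). Qed.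

Section MarkovAdditive.
Variables (R : realType) (d p : nat).
Local Notation V := 'rV[R]_d.
Implicit Types (mu : jumps R d p) (g : 'M[R]_(p, d)) (x y theta : V).

Lemma dotvBl x y theta : dotv (x - y) theta = dotv x theta - dotv y theta.
Proof. by rewrite /dotv -sumrB; apply: eq_bigr => k _; rewrite !mxE mulrBl. Qed.

Lemma dotvBr theta x y : dotv theta (x - y) = dotv theta x - dotv theta y.
Proof. by rewrite /dotv -sumrB; apply: eq_bigr => k _; rewrite !mxE mulrBr. Qed.

Lemma dotv0r x : dotv x 0 = 0.
Proof. by rewrite /dotv big1 // => k _; rewrite mxE mulr0. Qed.

Lemma dotvNr x theta : dotv x (- theta) = - dotv x theta.
Proof. by rewrite -[- theta]sub0r dotvBr dotv0r sub0r. Qed.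

Lemma dotv_delta x k : dotv x (delta_mx 0 k) = x 0 k.
Proof.
rewrite /dotv (bigD1 k) //= mxE !eqxx mulr1 big1 ?addr0 // => j /negbTE jk.
by rewrite mxE jk andbF mulr0.
Qed.

Lemma rsum_shift (f : V -> R) w : rsum (fun x => f (x + w)) = rsum f.
Proof. by apply: (reindex_rsum f); exists (fun x => x - w) => x; rewrite ?addrK ?subrK. Qed.

Lemma rsum_change_section mu g i j (F : V -> R) :
  rsum (fun x => F x * change_section g mu i j x) =
  rsum (fun y => F (y - (row j g - row i g)) * mu i j y).
Proof.
rewrite -[RHS](rsum_shift _ (row j g - row i g)).
by congr rsum; apply/funext => x; rewrite addrK /change_section addrA.
Qed.

Lemma trans_change_section mu g : trans (change_section g mu) = trans mu.
Proof.
apply/matrixP => i j; rewrite !mxE -[RHS](rsum_shift _ (row j g - row i g)).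
by congr rsum; apply/funext => x; rewrite /change_section addrA.
Qed.

Definition expi (t : R) : complex R := Complex (cos t) (sin t).

Lemma expiD a b : expi (a + b) = expi a * expi b.
Proof. by rewrite /expi cosD sinD; simpc; congr Complex; ring. Qed.

Lemma expi0 : expi 0 = 1.
Proof. by rewrite /expi cos0 sin0. Qed.

Lemma expiNK t : expi (- t) * expi t = 1.
Proof. by rewrite -expiD addNr expi0. Qed.

Definition phase g theta : 'M[complex R]_p := diag_mx (\row_i expi (dotv (row i g) theta)).

Lemma phaseNK g theta : phase g (- theta) *m phase g theta = 1%:M.
Proof.
rewrite mulmx_diag -diag_const_mx; congr diag_mx.
by apply/rowP => k; rewrite !mxE dotvNr expiNK.
Qed.

Lemma phase0 g : phase g 0 = 1%:M.
Proof.
by rewrite -diag_const_mx; congr diag_mx; apply/rowP => k; rewrite !mxE dotv0r expi0.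
Qed.

Lemma fourier_change_section_entry mu g theta i j :
  abs_summable (fun x => cos (dotv x theta) * mu i j x) ->
  abs_summable (fun x => sin (dotv x theta) * mu i j x) ->
  fourier (change_section g mu) theta i j =
  expi (dotv (row i g - row j g) theta) * fourier mu theta i j.
Proof.
move=> sc ss; rewrite !mxE !rsum_change_section.
set psi := dotv (row i g - row j g) theta.
have shift y : dotv (y - (row j g - row i g)) theta = dotv y theta + psi.
  by rewrite /psi !dotvBl; ring.
have -> : (fun y => cos (dotv (y - (row j g - row i g)) theta) * mu i j y) =
    (fun y => cos psi * (cos (dotv y theta) * mu i j y) +
              - sin psi * (sin (dotv y theta) * mu i j y)).
  by apply/funext => y; rewrite shift cosD; ring.
have -> : (fun y => sin (dotv (y - (row j g - row i g)) theta) * mu i j y) =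
    (fun y => cos psi * (sin (dotv y theta) * mu i j y) +
              sin psi * (cos (dotv y theta) * mu i j y)).
  by apply/funext => y; rewrite shift sinD; ring.
by rewrite !rsumD ?abs_summableZ // !rsumZ // /expi; simpc; congr Complex; ring.
Qed.

Lemma fourier_change_section mu g theta :
  (forall i j, abs_summable (fun x => cos (dotv x theta) * mu i j x)) ->
  (forall i j, abs_summable (fun x => sin (dotv x theta) * mu i j x)) ->
  fourier (change_section g mu) theta =
  phase g theta *m fourier mu theta *m phase g (- theta).
Proof.
move=> sc ss; apply/matrixP => i j.
rewrite fourier_change_section_entry //; set F := fourier mu theta.
by rewrite mul_mx_diag mul_diag_mx !mxE dotvBl expiD dotvNr mulrAC.
Qed.

Lemma eigenvalue_fourier_change_section mu g theta :
  (forall i j, abs_summable (fun x => cos (dotv x theta) * mu i j x)) ->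
  (forall i j, abs_summable (fun x => sin (dotv x theta) * mu i j x)) ->
  eigenvalue (fourier (change_section g mu) theta) = eigenvalue (fourier mu theta).
Proof.
move=> sc ss; have -> := fourier_change_section g sc ss.
apply: (eigenvalue_conj _ (phaseNK g theta)).
by rewrite -[X in phase g X *m _]opprK phaseNK.
Qed.

Section Moments.
Variable mu : jumps R d p.
Hypotheses (mu_ge0 : forall i j x, 0 <= mu i j x) (mu_mom : exp_moments mu).

Lemma exp_moments_abs_summable (h : V -> R) i j :
  (forall x, `|h x| <= 1 + `|x|) -> abs_summable (fun x => h x * mu i j x).
Proof.
move=> h_le; have : abs_summable (fun x => expR (1 * `|x|) * mu i j x).
  apply: le_lt_trans (@mu_mom i j 1 ltr01); apply: le_esum => x _.
  by rewrite lee_fin ger0_norm // mulr_ge0 ?expR_ge0.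
apply: abs_summable_le => x; rewrite mul1r !normrM (ger0_norm (expR_ge0 _)).
by rewrite ler_wpM2r // (le_trans (h_le x)) // expR_ge1Dx.
Qed.

Lemma abs_summable_mass i j : abs_summable (mu i j).
Proof.
apply: abs_summable_le (@exp_moments_abs_summable (fun=> 1) i j _) => x.
  by rewrite mul1r.
by rewrite normr1 lerDl.
Qed.

Lemma abs_summable_coord i j k : abs_summable (fun x : V => x 0 k * mu i j x).
Proof.
by apply: exp_moments_abs_summable => x; rewrite (le_trans (normr_entry_le x 0 k)) // lerDr.
Qed.

Lemma abs_summable_cos theta i j :
  abs_summable (fun x => cos (dotv x theta) * mu i j x).
Proof. by apply: exp_moments_abs_summable => x; rewrite (le_trans (cos_max _)) // lerDl. Qed.

Lemma abs_summable_sin theta i j :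
  abs_summable (fun x => sin (dotv x theta) * mu i j x).
Proof. by apply: exp_moments_abs_summable => x; rewrite (le_trans (sin_max _)) // lerDl. Qed.
End Moments.

Lemma local_drift_change_section mu g i j :
  (forall k, abs_summable (fun x : V => x 0 k * mu i j x)) -> abs_summable (mu i j) ->
  local_drift (change_section g mu) i j =
  local_drift mu i j - trans mu i j *: (row j g - row i g).
Proof.
move=> s_coord s_mass; apply/rowP => k; rewrite !mxE.
rewrite (rsum_change_section _ _ _ _ (fun x : V => x 0 k)).
have -> : (fun y : V => (y - (row j g - row i g)) 0 k * mu i j y) =
    (fun y => y 0 k * mu i j y + - (g j k - g i k) * mu i j y).
  by apply/funext => y; rewrite !mxE; ring.
by rewrite rsumD ?abs_summableZ // rsumZ //; ring.
Qed.

Lemma global_drift_change_section mu g (pi : 'rV[R]_p) :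
  (forall i j k, abs_summable (fun x : V => x 0 k * mu i j x)) ->
  (forall i j, abs_summable (mu i j)) ->
  global_drift (change_section g mu) pi =
  global_drift mu pi - \sum_i \sum_j (pi 0 i * trans mu i j) *: (row j g - row i g).
Proof.
move=> s_coord s_mass; rewrite /global_drift -sumrB; apply: eq_bigr => i _.
rewrite -sumrB; apply: eq_bigr => j _.
by rewrite local_drift_change_section // scalerBr scalerA.
Qed.

Lemma intv0 : intv (0 : V).
Proof. by move=> k; rewrite mxE rpred0. Qed.

Lemma intv_delta k : intv (delta_mx 0 k : V).
Proof. by move=> m; rewrite mxE rpred_nat. Qed.

Lemma irreducible_fixed_eq0 mu :
  (forall i j x, 0 <= mu i j x) -> (forall i j, abs_summable (mu i j)) ->
  irreducible_MAP mu ->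
  forall w : 'rV_p, (forall i, 0 <= w 0 i) -> w *m trans mu = w ->
  forall k, w 0 k = 0 -> w = 0.
Proof.
move=> mu_ge0 s_mass irr w w_ge0 wP k wk; apply/rowP => i; rewrite mxE.
have [n reach_ik] := irr 0 0 i k intv0 intv0.
(* Since w_t = sum_v w_v P_{v,t}, a zero of w propagates backwards along
   transitions of positive probability. *)
suff reach_eq0 m s t : reach mu m s t -> w 0 t.2 = 0 -> w 0 s.2 = 0.
  exact: reach_eq0 reach_ik wk.
elim: m s t => [|m IHm] s t /=; first by move=> ->.
move=> [u [reach_su step_ut]] wt; apply: IHm reach_su _.
have P_gt0 : 0 < trans mu u.2 t.2 by rewrite mxE; exact: rsum_gt0 step_ut.
have wP_t : \sum_v w 0 v * trans mu v t.2 = 0.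
  by rewrite -[RHS]wt -[in RHS]wP mxE.
have /psumr_eq0P/(_ wP_t u.2 isT)/eqP : forall v, true -> 0 <= w 0 v * trans mu v t.2.
  by move=> v _; rewrite mulr_ge0 // mxE rsum_ge0.
by rewrite mulf_eq0 (gt_eqF P_gt0) orbF => /eqP.
Qed.

Lemma reach_dotv_change_section mu g (a : V) c :
  (forall i j x, change_section g mu i j x != 0 -> dotv a x = c) ->
  forall n s t, reach mu n s t ->
  dotv a (t.1 - s.1) = n%:R * c + dotv a (row t.2 g) - dotv a (row s.2 g).
Proof.
move=> supp_a; elim=> [|n IHn] s t /=.
  by move=> ->; rewrite subrr dotv0r mul0r add0r subrr.
move=> [u [reach_su step_ut]].
have /supp_a : change_section g mu u.2 t.2 (t.1 - u.1 - (row t.2 g - row u.2 g)) != 0.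
  by rewrite /change_section -addrA subrK gt_eqF.
rewrite !dotvBr => step_c; have := IHn _ _ reach_su; rewrite dotvBr -natr1.
lra.
Qed.

Lemma change_section_not_in_hyperplane mu g : (0 < p)%N ->
  irreducible_MAP mu -> aperiodic_MAP mu ->
  ~ supp_in_affine_hyperplane (change_section g mu).
Proof.
move=> p_gt0 irr aper [a [c [a_neq0 supp_a]]].
have reach_a := reach_dotv_change_section supp_a.
pose i0 := Ordinal p_gt0.
have c0 : c = 0.
  have [n [n_gt0 loop _]] := aper 0 i0 intv0 2 isT.
  move: (reach_a _ _ _ loop); rewrite /= subrr dotv0r addrK => /esym/eqP.
  by rewrite mulf_eq0 pnatr_eq0 eqn0Ngt n_gt0 => /eqP.
move/eqP: a_neq0; apply; apply/rowP => k; rewrite mxE.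
have [m path_k] := irr 0 (delta_mx 0 k) i0 i0 intv0 (intv_delta k).
by move: (reach_a _ _ _ path_k); rewrite /= subr0 dotv_delta c0 mulr0 add0r subrr.
Qed.
End MarkovAdditive.

Theorem proposition2p5 (R : realType) (d p : nat)
  (hd : (0 < d)%N) (hp : (0 < p)%N)
  (mu : 'I_p -> 'I_p -> 'rV[R]_d -> R)
  (* mu_{i,j} is supported on Z^d and is a (sub-probability) measure *)
  (mu_int : forall i j x, mu i j x != 0 -> intv x)
  (mu_ge0 : forall i j x, 0 <= mu i j x)
  (* (Z_n) is a Markov chain: total mass out of each state is 1 *)
  (mu_stoch : forall i, \sum_j rsum (mu i j) = 1)
  (mu_irr : irreducible_MAP mu)
  (mu_aper : aperiodic_MAP mu)
  (mu_mom : exp_moments mu)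
  (g : 'M[R]_(p, d)) :
  let gmu := change_section g mu in
  (* (1) *)
  ((forall (theta : 'rV[R]_d) (lambda : complex R),
      eigenvalue (fourier gmu theta) lambda <-> eigenvalue (fourier mu theta) lambda)
   /\ (forall (theta : 'rV[R]_d) (lambda : complex R),
      leading_eigenvalue (fourier gmu theta) lambda <->
      leading_eigenvalue (fourier mu theta) lambda))
  (* (2) *)
  /\ (fourier gmu 0 = fourier mu 0
      /\ forall pi : 'rV[R]_p, stationary (trans gmu) pi <-> stationary (trans mu) pi)
  (* (3) *)
  /\ (forall pi gpi : 'rV[R]_p, stationary (trans mu) pi -> stationary (trans gmu) gpi ->
        global_drift gmu gpi = global_drift mu pi)
  (* (4) *)
  /\ ~ supp_in_affine_hyperplane gmu.
Proof.
move=> gmu.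
have s_mass := abs_summable_mass mu_ge0 mu_mom.
have s_coord := abs_summable_coord mu_ge0 mu_mom.
have s_cos := abs_summable_cos mu_ge0 mu_mom.
have s_sin := abs_summable_sin mu_ge0 mu_mom.
have eig theta : eigenvalue (fourier gmu theta) = eigenvalue (fourier mu theta).
  exact: eigenvalue_fourier_change_section.
have trans_g : trans gmu = trans mu := trans_change_section mu g.
have P1 i : \sum_j trans mu i j = 1.
  by rewrite -(mu_stoch i); apply: eq_bigr => j _; rewrite mxE.
split; [split | split; [split | split]].
- by move=> theta l; rewrite eig.
- by move=> theta l; rewrite /leading_eigenvalue eig.
- by rewrite fourier_change_section // oppr0 phase0 mul1mx mulmx1.
- by move=> pi; rewrite trans_g.
- move=> pi gpi pi_st; rewrite trans_g => gpi_st.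
  have fixed_eq0 := irreducible_fixed_eq0 mu_ge0 s_mass mu_irr.
  rewrite (stationary_unique hp fixed_eq0 gpi_st pi_st) global_drift_change_section //.
  by case: pi_st => _ [_ piP]; rewrite stationary_increments_eq0 ?subr0.
- exact: change_section_not_in_hyperplane.
Qed.
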